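(* Let $f(x)=\frac12x^\top Ax-b^\top x$ on $\mathbb{R}^n$, where $A$ is symmetric positive definite with $\mu I\preceq A\preceq LI$, $0<\mu\le L$, and $b\in\mathbb{R}^n$. Consider the SR1 iteration: choose $x_0$, set $G_0=L\cdot I$, and for $k=0,1,\dots$ set $x_{k+1}=x_k-G_k^{-1}\nabla f(x_k)$, $u_k=x_{k+1}-x_k$, $G_{k+1}=\mathrm{SR1}(A,G_k,u_k)$. Then for all $k\ge1$, $$\lambda_f(x_k)\le\left(e^{\frac{n}{k}\ln\frac{L}{\mu}}-1\right)^{k/2}\sqrt{\frac{L}{\mu}}\cdot\lambda_f(x_0).$$
   Context: $\lambda_f(x)=\sqrt{\nabla f(x)^\top A^{-1}\nabla f(x)}$. For symmetric matrices $A,G$ and $u\neq0$, $\mathrm{SR1}(A,G,u)=G$ if $(G-A)u=0$, and otherwise $\mathrm{SR1}(A,G,u)=G-\frac{(G-A)uu^\top(G-A)}{u^\top(G-A)u}$. *)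

From HB Require Import structures.
From mathcomp Require Import all_boot all_order all_algebra.
From mathcomp Require Import all_classical all_reals all_analysis.
Set Implicit Arguments. Unset Strict Implicit. Unset Printing Implicit Defensive.
Import Order.TTheory GRing.Theory Num.Theory.
Local Open Scope ring_scope.

Section Defs.
Variables (R : realType) (n : nat).

Definition sc (M : 'M[R]_1) : R := M ord0 ord0.

Definition qform (M : 'M[R]_n) (v : 'cV[R]_n) : R := sc (v^T *m M *m v).

Definition loewner_le (M N : 'M[R]_n) : Prop :=
  forall v : 'cV[R]_n, qform M v <= qform N v.

Definition sym_mx (M : 'M[R]_n) : Prop := M^T = M.

(* gradient of f(x) = 1/2 x^T A x - b^T x  (A symmetric) *)
Definition grad_f (A : 'M[R]_n) (b : 'cV[R]_n) (x : 'cV[R]_n) : 'cV[R]_n :=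
  A *m x - b.

Definition lambda_f (A : 'M[R]_n) (b : 'cV[R]_n) (x : 'cV[R]_n) : R :=
  Num.sqrt (qform (invmx A) (grad_f A b x)).

Definition SR1 (A G : 'M[R]_n) (u : 'cV[R]_n) : 'M[R]_n :=
  if (G - A) *m u == 0 then G
  else G - ((sc (u^T *m (G - A) *m u))^-1 *: ((G - A) *m u *m u^T *m (G - A))).

Fixpoint sr1_iter (A : 'M[R]_n) (b : 'cV[R]_n) (L : R) (x0 : 'cV[R]_n) (k : nat)
  : 'cV[R]_n * 'M[R]_n :=
  match k with
  | 0%N => (x0, L%:M)
  | k'.+1 =>
      let (x, G) := sr1_iter A b L x0 k' in
      let x' := x - invmx G *m grad_f A b x in
      (x', SR1 A G (x' - x))
  end.

Definition sr1_x A b L x0 k := (sr1_iter A b L x0 k).1.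
End Defs.

(* Write D_k = G_k - A.  The SR1 update replaces D_k by its Wedderburn rank-one
   reduction D - (D u)(D u)^T / (u^T D u) along u = x_{k+1} - x_k, which keeps
   D_k symmetric, positive semidefinite and below L I - A, and kills D_k u.
   Since grad f(x_{k+1}) = - D_k u, either the gradient vanishes or the rank of
   D_k drops, so grad f(x_k) = 0 as soon as k > n.  Independently, a
   quasi-Newton step with A <= G gives
   lambda_f(x_{k+1})^2 <= 1/2 (A^-1 g)^T D (A^-1 g)
                       <= (L/mu - 1) lambda_f(x_k)^2,
   and for k <= n the linear rate (L/mu - 1)^(k/2) is dominated by the claimed
   one because (L/mu)^(n/k) >= L/mu. *)

From HB Require Import structures.
From mathcomp Require Import all_boot all_order all_algebra.
From mathcomp Require Import all_classical all_reals all_analysis.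
From mathcomp Require Import ring lra.
Import Order.TTheory GRing.Theory Num.Theory.
Local Open Scope ring_scope.
Set Implicit Arguments. Unset Strict Implicit. Unset Printing Implicit Defensive.

Lemma discr_le0_of_quadratic_ge0 (R : realFieldType) (a b c : R) :
  0 <= c -> (forall t, 0 <= a + 2 * b * t + c * t ^+ 2) -> b ^+ 2 <= a * c.
Proof.
move=> c_ge0 q_ge0; have [c0 | c_gt0] := eqVneq c 0.
  have [b0 | b_neq0] := eqVneq b 0; first by rewrite b0 c0 expr0n mulr0.
  have := q_ge0 (- (a + 1) / (2 * b)).
  have -> : a + 2 * b * (- (a + 1) / (2 * b)) + c * (- (a + 1) / (2 * b)) ^+ 2 = -1.
    by rewrite c0; field.
  by rewrite ler0N1.
have c_pos : 0 < c by rewrite lt0r c_gt0.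
have := q_ge0 (- b / c).
have -> : a + 2 * b * (- b / c) + c * (- b / c) ^+ 2 = (a * c - b ^+ 2) / c.
  by field.
by rewrite pmulr_lge0 ?invr_gt0 // subr_ge0.
Qed.

Lemma mxrank_mulmx_ltn (F : fieldType) m n (P : 'M[F]_m) (D : 'M[F]_(m, n))
    (u : 'cV[F]_n) :
  P *m D *m u = 0 -> D *m u != 0 -> (\rank (P *m D) < \rank D)%N.
Proof.
move=> PDu0 Du_neq0; have PD_D : (P *m D <= D)%MS by apply: submxMl.
rewrite ltn_neqAle (mxrank_leqif_eq PD_D) (mxrank_leqif_eq PD_D) andbT.
apply: contra Du_neq0 => /andP[_ /submxP[X ->]].
by rewrite -mulmxA PDu0 mulmx0.
Qed.

Section QuadraticForms.
Variables (R : realType) (n : nat).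
Implicit Types (M N D : 'M[R]_n) (u v w : 'cV[R]_n).

Definition bform M u v : R := sc (u^T *m M *m v).

Definition psd_mx M : Prop := forall v, 0 <= qform M v.

Lemma bformDl M u v w : bform M (u + v) w = bform M u w + bform M v w.
Proof. by rewrite /bform linearD /= !mulmxDl /sc mxE. Qed.

Lemma bformZl M a u v : bform M (a *: u) v = a * bform M u v.
Proof. by rewrite /bform linearZ /= -!scalemxAl /sc mxE. Qed.

Lemma bformDr M u v w : bform M u (v + w) = bform M u v + bform M u w.
Proof. by rewrite /bform !mulmxDr /sc mxE. Qed.

Lemma bformZr M a u v : bform M u (a *: v) = a * bform M u v.
Proof. by rewrite /bform -!scalemxAr /sc mxE. Qed.

Lemma bformC M u v : sym_mx M -> bform M u v = bform M v u.
Proof.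
move=> symM; have scT (X : 'M[R]_1) : sc X^T = sc X by rewrite /sc mxE.
by rewrite /bform -scT !trmx_mul trmxK symM mulmxA.
Qed.

Lemma qformD M N v : qform (M + N) v = qform M v + qform N v.
Proof. by rewrite /qform mulmxDr mulmxDl /sc mxE. Qed.

Lemma qformB M N v : qform (M - N) v = qform M v - qform N v.
Proof. by rewrite /qform mulmxBr mulmxBl /sc !mxE. Qed.

Lemma qformZ M a v : qform (a *: M) v = a * qform M v.
Proof. by rewrite /qform -scalemxAr -scalemxAl /sc mxE. Qed.

Lemma qform_scalar a v : qform a%:M v = a * qform 1%:M v.
Proof. by rewrite -qformZ scale_scalar_mx mulr1. Qed.

Lemma qform1E v : qform 1%:M v = \sum_i v i ord0 ^+ 2.
Proof.
rewrite /qform /sc mulmx1 mxE; apply: eq_bigr => i _.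
by rewrite mxE expr2.
Qed.

Lemma qform1_ge0 v : 0 <= qform 1%:M v.
Proof. by rewrite qform1E sumr_ge0 // => i _; rewrite sqr_ge0. Qed.

Lemma qform1_eq0 v : qform 1%:M v = 0 -> v = 0.
Proof.
rewrite qform1E => /eqP; rewrite psumr_eq0 => [/allP v0|i _]; last first.
  exact: sqr_ge0.
apply/matrixP => i j; rewrite (ord1 j) mxE.
by apply/eqP; rewrite -sqrf_eq0; apply: v0; rewrite mem_index_enum.
Qed.

Lemma qformDZ M v u t : sym_mx M ->
  qform M (v + t *: u) = qform M v + 2 * bform M v u * t + qform M u * t ^+ 2.
Proof.
move=> symM; rewrite /qform -!/(bform _ _ _).
rewrite !bformDl !bformDr !bformZl !bformZr (bformC u v symM); ring.
Qed.

Lemma sym_mxB M N : sym_mx M -> sym_mx N -> sym_mx (M - N).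
Proof. by rewrite /sym_mx linearB /= => -> ->. Qed.

Lemma loewner_leE M N : loewner_le M N <-> psd_mx (N - M).
Proof.
by split=> le v; move: (le v); rewrite qformB subr_ge0.
Qed.

Lemma loewner_le_trans N M P : loewner_le M N -> loewner_le N P -> loewner_le M P.
Proof. by move=> MN NP v; apply: le_trans (MN v) (NP v). Qed.

Lemma bform_sqr_le D u v : sym_mx D -> psd_mx D ->
  bform D v u ^+ 2 <= qform D v * qform D u.
Proof.
move=> symD psdD; apply: discr_le0_of_quadratic_ge0 => // t.
by rewrite -qformDZ.
Qed.

Lemma psd_qform_eq0 D u : sym_mx D -> psd_mx D -> qform D u = 0 -> D *m u = 0.
Proof.
move=> symD psdD qu0; apply: qform1_eq0; apply/eqP.
have <- : bform D (D *m u) u = qform 1%:M (D *m u).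
  by rewrite /bform /qform mulmx1 mulmxA.
have := bform_sqr_le u (D *m u) symD psdD; rewrite qu0 mulr0.
by rewrite -sqrf_eq0 eq_le sqr_ge0 andbT.
Qed.

Lemma loewner_unitmx c M : 0 < c -> loewner_le c%:M M -> M \in unitmx.
Proof.
move=> c_gt0 cM; rewrite unitmxE unitfE; apply/negP => /det0P[v v_neq0 vM0].
have : qform 1%:M v^T = 0.
  apply/eqP; rewrite eq_le qform1_ge0 andbT -(pmulr_rle0 _ c_gt0) -qform_scalar.
  by apply: le_trans (cM _) _; rewrite /qform trmxK vM0 !mul0mx /sc mxE.
move/qform1_eq0/(congr1 trmx); rewrite trmxK linear0 => v0.
by rewrite v0 eqxx in v_neq0.
Qed.

Lemma qform_invmx M v : sym_mx M -> M \in unitmx ->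
  qform (invmx M) (M *m v) = qform M v.
Proof.
move=> symM uM; rewrite /qform trmx_mul symM -!mulmxA (mulmxA (invmx M)).
by rewrite mulVmx // mul1mx.
Qed.

End QuadraticForms.

Section Wedderburn.
Variables (R : realType) (n : nat).
Implicit Types (A G D : 'M[R]_n) (u v : 'cV[R]_n).

Definition wedderburn D u : 'M[R]_n :=
  D - (qform D u)^-1 *: (D *m u *m u^T *m D).

(* When (G - A) u = 0 the correction term vanishes, so no case split remains. *)
Lemma SR1E A G u : SR1 A G u = A + wedderburn (G - A) u.
Proof.
rewrite /SR1 /wedderburn; case: eqP => [Du0 | _].
  by rewrite Du0 !mul0mx scaler0 subr0 addrC subrK.
by rewrite addrA (addrC A) subrK.
Qed.

Lemma sym_wedderburn D u : sym_mx D -> sym_mx (wedderburn D u).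
Proof.
move=> symD; rewrite /sym_mx /wedderburn linearB linearZ /= !trmx_mul trmxK.
by rewrite symD !mulmxA.
Qed.

Lemma qform_wedderburn D u v : sym_mx D ->
  qform (wedderburn D u) v = qform D v - bform D v u ^+ 2 / qform D u.
Proof.
move=> symD; rewrite qformB qformZ mulrC; congr (_ - _ * _).
rewrite expr2 {2}(bformC _ _ symD) /qform /bform /sc.
have -> : v^T *m (D *m u *m u^T *m D) *m v = v^T *m D *m u *m (u^T *m D *m v).
  by rewrite !mulmxA.
by rewrite mxE big_ord1.
Qed.

Section PositiveSemidefinite.
Variable D : 'M[R]_n.
Hypotheses (symD : sym_mx D) (psdD : psd_mx D).

Lemma wedderburn_loewner_le u : loewner_le (wedderburn D u) D.
Proof.
move=> v; rewrite qform_wedderburn // gerBl.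
by rewrite divr_ge0 ?sqr_ge0.
Qed.

Lemma psd_wedderburn u : psd_mx (wedderburn D u).
Proof.
move=> v; rewrite qform_wedderburn // subr_ge0.
have [->|qu_neq0] := eqVneq (qform D u) 0; first by rewrite invr0 mulr0 psdD.
have qu_gt0 : 0 < qform D u by rewrite lt0r qu_neq0 psdD.
by rewrite ler_pdivrMr // bform_sqr_le.
Qed.

Lemma wedderburn_mulmx u : qform D u != 0 -> wedderburn D u *m u = 0.
Proof.
move=> qu_neq0; rewrite /wedderburn mulmxBl -scalemxAl -!mulmxA.
rewrite (mulmxA u^T) [u^T *m D *m u]mx11_scalar -/(sc _) -/(qform D u).
by rewrite mul_mx_scalar -scalemxAr scalerA mulVf // scale1r subrr.
Qed.

Lemma mxrank_wedderburn u : D *m u != 0 ->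
  (\rank (wedderburn D u) < \rank D)%N.
Proof.
move=> Du_neq0.
have qu_neq0 : qform D u != 0.
  by apply: contra Du_neq0 => /eqP/(psd_qform_eq0 symD psdD)->.
have WE : wedderburn D u = (1%:M - (qform D u)^-1 *: (D *m u *m u^T)) *m D.
  by rewrite mulmxBl mul1mx -scalemxAl.
by rewrite WE; apply: mxrank_mulmx_ltn Du_neq0; rewrite -WE wedderburn_mulmx.
Qed.

End PositiveSemidefinite.

Lemma SR1_loewner A G u : sym_mx A -> sym_mx G -> loewner_le A G ->
  [/\ sym_mx (SR1 A G u), loewner_le A (SR1 A G u) & loewner_le (SR1 A G u) G].
Proof.
move=> symA symG /loewner_leE psdD.
have symD : sym_mx (G - A) by apply: sym_mxB.
rewrite SR1E; split.
- by rewrite /sym_mx linearD /= symA sym_wedderburn.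
- by apply/loewner_leE; rewrite addrC addKr; apply: psd_wedderburn.
- apply/loewner_leE; rewrite opprD addrA; apply/loewner_leE.
  exact: wedderburn_loewner_le.
Qed.

End Wedderburn.

Section NewtonStep.
Variables (R : realType) (n : nat).
Implicit Types (A G D : 'M[R]_n) (b x z e : 'cV[R]_n).

Lemma grad_fD A b x d : grad_f A b (x + d) = grad_f A b x + A *m d.
Proof. by rewrite /grad_f mulmxDr addrAC. Qed.

Lemma qform_half_contraction A D z e : sym_mx D -> psd_mx D ->
  (A + D) *m z = D *m e -> qform A z <= qform D e / 2.
Proof.
move=> symD psdD ADz.
have qADz : qform A z + qform D z = bform D z e.
  by rewrite -qformD /qform /bform -!mulmxA ADz.
have := psdD (z + (-1) *: e); rewrite qformDZ //.
have := psdD z; lra.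
Qed.

Lemma newton_step_contraction A G b x : sym_mx A -> sym_mx G ->
  A \in unitmx -> G \in unitmx -> loewner_le A G ->
  qform (invmx A) (grad_f A b (x - invmx G *m grad_f A b x))
    <= qform (G - A) (invmx A *m grad_f A b x) / 2.
Proof.
move=> symA symG uA uG /loewner_leE psdD; set g := grad_f A b x.
have symD : sym_mx (G - A) by apply: sym_mxB.
rewrite grad_fD -[in X in qform _ X](mulKVmx uA (_ + _)) qform_invmx //.
apply: qform_half_contraction => //.
rewrite addrC subrK -/g mulmxN mulmxDr mulmxN mulKmx // mulmxBr mulKVmx //.
by rewrite mulmxBl mulKVmx.
Qed.

End NewtonStep.

Section SR1Iteration.
Variables (R : realType) (n : nat) (A : 'M[R]_n) (b : 'cV[R]_n) (mu L : R)
  (x0 : 'cV[R]_n).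
Hypotheses (symA : sym_mx A) (mu_gt0 : 0 < mu) (mu_le_L : mu <= L)
  (muA : loewner_le mu%:M A) (AL : loewner_le A L%:M).

Local Notation x := (sr1_x A b L x0).
Local Notation G k := (sr1_iter A b L x0 k).2.

Lemma sr1_xS k : x k.+1 = x k - invmx (G k) *m grad_f A b (x k).
Proof. by rewrite /sr1_x /=; case: sr1_iter. Qed.

Lemma sr1_GS k : G k.+1 = SR1 A (G k) (x k.+1 - x k).
Proof. by rewrite sr1_xS /sr1_x /=; case: sr1_iter. Qed.

Lemma sr1_G_loewner k :
  [/\ sym_mx (G k), loewner_le A (G k) & loewner_le (G k) L%:M].
Proof.
elim: k => [|k [symG AG GL]]; first by split=> //; exact: tr_scalar_mx.
have [symG' AG' G'G] := SR1_loewner (x k.+1 - x k) symA symG AG.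
by rewrite sr1_GS; split=> //; apply: loewner_le_trans G'G GL.
Qed.

Lemma unitmx_sr1_G k : G k \in unitmx.
Proof.
have [_ AG _] := sr1_G_loewner k.
exact: loewner_unitmx mu_gt0 (loewner_le_trans muA AG).
Qed.

Lemma lambda_f_sr1_xS k :
  lambda_f A b (x k.+1) <= Num.sqrt (L / mu - 1) * lambda_f A b (x k).
Proof.
have [symG AG GL] := sr1_G_loewner k.
have uA := loewner_unitmx mu_gt0 muA.
set g := grad_f A b (x k); set e := invmx A *m g.
have qAe : qform (invmx A) g = qform A e.
  by rewrite -(qform_invmx e symA uA) /e mulKVmx.
have qAe_ge0 : 0 <= qform A e.
  have := muA e; rewrite qform_scalar; apply: le_trans.
  exact: mulr_ge0 (ltW mu_gt0) (qform1_ge0 e).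
have K_ge1 : 1 <= L / mu by rewrite ler_pdivlMr // mul1r.
have K1_ge0 : 0 <= L / mu - 1 by rewrite subr_ge0.
have qDe : qform (G k - A) e <= (L / mu - 1) * qform A e.
  have := GL e; rewrite qform_scalar qformB.
  have -> : L * qform 1%:M e = L / mu * qform mu%:M e.
    by rewrite qform_scalar mulrA divfK ?gt_eqF.
  have := ler_wpM2l (le_trans ler01 K_ge1) (muA e).
  lra.
rewrite /lambda_f -sqrtrM //; apply: ler_wsqrtr.
rewrite sr1_xS qAe; apply: le_trans (newton_step_contraction _ _ _ _ _ _ _) _ => //.
  exact: unitmx_sr1_G.
have := mulr_ge0 K1_ge0 qAe_ge0; lra.
Qed.

Lemma lambda_f_sr1_x k :
  lambda_f A b (x k) <= Num.sqrt (L / mu - 1) ^+ k * lambda_f A b x0.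
Proof.
elim: k => [|k IH]; first by rewrite expr0 mul1r.
apply: le_trans (lambda_f_sr1_xS k) _.
by rewrite exprS -mulrA ler_wpM2l ?sqrtr_ge0.
Qed.

Lemma sr1_finite_termination k :
  grad_f A b (x k) = 0 \/ (k + \rank (G k - A)%R <= n)%N.
Proof.
elim: k => [|k IH]; first by right; rewrite add0n rank_leq_col.
have [symG AG _] := sr1_G_loewner k.
set d := x k.+1 - x k; set D := G k - A.
have gS : grad_f A b (x k.+1) = - (D *m d).
  rewrite /d sr1_xS addrAC subrr add0r grad_fD !mulmxN opprK mulmxBl.
  by rewrite mulKVmx ?unitmx_sr1_G.
have [Dd0 | Dd_neq0] := eqVneq (D *m d) 0; first by left; rewrite gS Dd0 oppr0.
right; case: IH => [g0 | rk].
  by move: Dd_neq0; rewrite /d sr1_xS g0 mulmx0 subr0 subrr mulmx0 eqxx.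
have symD : sym_mx D by apply: sym_mxB.
have := mxrank_wedderburn symD (proj1 (loewner_leE _ _) AG) Dd_neq0.
rewrite sr1_GS SR1E (addrC A) addrK -/d -/D => rk_lt.
by rewrite addSnnS (leq_trans _ rk) // leq_add2l.
Qed.

Lemma grad_f_sr1_x_eq0 k : (n < k)%N -> grad_f A b (x k) = 0.
Proof.
case: (sr1_finite_termination k) => // rk.
by rewrite ltnNge (leq_trans (leq_addr _ _) rk).
Qed.

End SR1Iteration.

Lemma linear_rate_le_sr1_rate (R : realType) (K : R) (n k : nat) :
  1 <= K -> (0 < k <= n)%N ->
  Num.sqrt (K - 1) ^+ k
    <= (expR (n%:R / k%:R * ln K) - 1) `^ (k%:R / 2) * Num.sqrt K.
Proof.
move=> K_ge1 /andP[k_gt0 k_le_n].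
have K1_ge0 : 0 <= K - 1 by rewrite subr_ge0.
have nk_ge1 : 1 <= n%:R / k%:R :> R by rewrite ler_pdivlMr ?ltr0n // mul1r ler_nat.
have lnK_ge0 : 0 <= ln K := ln_ge0 K_ge1.
have K_le_exp : K <= expR (n%:R / k%:R * ln K).
  by rewrite -{1}(lnK (lt_le_trans ltr01 K_ge1)) ler_expR ler_peMl.
rewrite -powR12_sqrt // -powR_mulrn ?powR_ge0 // -powRrM mulrC.
apply: le_trans (_ : _ <= (expR (n%:R / k%:R * ln K) - 1) `^ (k%:R / 2)) _.
  by apply: ge0_ler_powR; rewrite ?nnegrE ?lerD2r // ?(le_trans K1_ge0) ?lerD2r.
by rewrite ler_peMr ?powR_ge0 // -sqrtr1 ler_wsqrtr.
Qed.

Theorem theorem2 (R : realType) (n : nat) (A : 'M[R]_n) (b : 'cV[R]_n)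
  (mu L : R) (x0 : 'cV[R]_n) :
  sym_mx A -> 0 < mu -> mu <= L ->
  loewner_le (mu%:M) A -> loewner_le A (L%:M) ->
  forall k : nat, (1 <= k)%N ->
    lambda_f A b (sr1_x A b L x0 k) <=
      (expR ((n%:R / k%:R) * ln (L / mu)) - 1) `^ (k%:R / 2)
      * Num.sqrt (L / mu) * lambda_f A b x0.
Proof.
move=> symA mu_gt0 mu_le_L muA AL k k_gt0.
have [k_le_n | n_lt_k] := leqP k n; last first.
  rewrite /lambda_f (grad_f_sr1_x_eq0 b x0 symA mu_gt0 muA AL n_lt_k).
  rewrite /qform mulmx0 /sc mxE sqrtr0.
  by rewrite !mulr_ge0 ?powR_ge0 ?sqrtr_ge0.
apply: le_trans (lambda_f_sr1_x b x0 symA mu_gt0 mu_le_L muA AL k) _.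
rewrite ler_wpM2r ?sqrtr_ge0 // linear_rate_le_sr1_rate ?k_gt0 //.
by rewrite ler_pdivlMr // mul1r.
Qed.
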